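(* There exists a simple temporal graph $\mathcal G$ whose non-strict-journey reachability graph is not isomorphic to the reachability graph of any happy temporal graph $\mathcal H$. (For instance, $\mathcal G$ on vertices $a,b,c,d,e$ with edges $ac,ad$ labeled $1$, $bc,de$ labeled $2$, and $cd$ labeled $3$.)
   Context: A temporal graph is a triple $\mathcal G=(V,E,\lambda)$ where $V$ is a finite vertex set, $E$ is a set of undirected edges on $V$, and $\lambda:E\to 2^{\mathbb N}\setminus\{\emptyset\}$ assigns to each edge a nonempty set of presence times. The footprint of $\mathcal G$ is the static graph $(V,E)$. A contact is a pair $(e,t)$ with $e\in E$ and $t\in\lambda(e)$. A journey from $u$ to $v$ is a sequence of contacts $(e_1,t_1),\dots,(e_k,t_k)$, $k\ge 1$, such that $e_1,\dots,e_k$ form a path from $u$ to $v$ in the footprint and $t_1\le t_2\le\dots\le t_k$ (a non-strict journey); it is strict if $t_1<t_2<\dots<t_k$. $\mathcal G$ is proper if $\lambda(e)\cap\lambda(e')=\emptyset$ for any two distinct edges $e,e'$ sharing an endpoint (in a proper graph every journey is strict); simple if $|\lambda(e)|=1$ for every edge $e$; happy if it is both proper and simple. The reachability graph $\mathcal C(\mathcal G)$ (with respect to a chosen journey notion) is the directed graph on $V$ having an arc $(u,v)$, $u\neq v$, if and only if there is a journey from $u$ to $v$. Reachability graphs are compared up to isomorphism of directed graphs. *)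

From mathcomp Require Import all_boot.
Set Implicit Arguments. Unset Strict Implicit. Unset Printing Implicit Defensive.

(* A temporal graph on a finite vertex type V: an edge relation (the footprint)
   and, for each pair of vertices, a (possibly infinite) set of presence times,
   given as a boolean predicate on nat.  Only the labels of actual edges matter. *)
Record tgraph (V : finType) := TGraph {
  tedge : rel V;
  tlab  : V -> V -> pred nat
}.

Definition tg_wf (V : finType) (G : tgraph V) : Prop :=
  (forall x, ~~ tedge G x x) /\
  (forall x y, tedge G x y = tedge G y x) /\
  (forall x y t, tlab G x y t = tlab G y x t) /\
  (forall x y, tedge G x y -> exists t, tlab G x y t).

Definition tg_simple (V : finType) (G : tgraph V) : Prop :=
  forall x y, tedge G x y -> exists t, forall t', tlab G x y t' <-> t' = t.

Definition tg_proper (V : finType) (G : tgraph V) : Prop :=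
  forall x y z, y != z -> tedge G x y -> tedge G x z ->
    forall t, ~ (tlab G x y t /\ tlab G x z t).

Definition tg_happy (V : finType) (G : tgraph V) : Prop :=
  tg_proper G /\ tg_simple G.

(* A journey from u is encoded as the list of contacts
   [(x1,t1); ...; (xk,tk)] : contact i uses edge x_{i-1} x_i (x_0 = u) at time t_i. *)
Fixpoint jcontacts (V : finType) (G : tgraph V) (x : V) (s : seq (V * nat)) : bool :=
  match s with
  | [::] => true
  | (y, t) :: s' => tedge G x y && tlab G x y t && jcontacts G y s'
  end.

Definition journey (V : finType) (G : tgraph V) (strict : bool)
    (u v : V) (s : seq (V * nat)) : Prop :=
  [/\ s != [::],
      last u (map fst s) = v,
      uniq (u :: map fst s),
      jcontacts G u s &
      sorted (fun a b : nat => if strict then a < b else a <= b) (map snd s)].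

Definition reach (V : finType) (G : tgraph V) (strict : bool) (u v : V) : Prop :=
  u != v /\ exists s, journey G strict u v s.

Definition digraph_iso (V W : finType) (A : V -> V -> Prop) (B : W -> W -> Prop) : Prop :=
  exists f : V -> W, bijective f /\ forall u v, A u v <-> B (f u) (f v).

From mathcomp Require Import all_boot.
From HB Require Import structures.
From mathcomp Require Import zify.
Set Implicit Arguments. Unset Strict Implicit.

(* In G, the vertices B and E reach neither A nor each other, whereas B and E
   reach C and D, and C and D reach B and E.  Suppose a happy H realises this.
   The neighbours of B and E lie in {C, D} and are distinct, since a common
   neighbour yields a journey between B and E; up to exchanging C and D, the
   only edges at B and E are BC and ED.  The journeys B -> D and E -> C then
   pass through B-C-D and E-D-C, and the journeys C -> E and D -> B through
   C-D-E or C-A-D, resp. D-C-B or D-A-C.  Each combination traverses two edges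
   at a common vertex in both orders, which forces them to carry the same label
   and contradicts properness. *)

Section Journeys.
Variables (V : finType) (H : tgraph V).

Definition journey2 (x y z : V) : Prop :=
  exists t1 t2, [/\ tedge H x y, tlab H x y t1, tedge H y z, tlab H y z t2 & t1 <= t2].

Lemma reach_of_journey b u v s : journey H b u v s -> reach H b u v.
Proof.
move=> J; split; last by exists s.
case: J => + <- /andP[+ _] _ _; case: s => [|[y t] s] //= _.
by apply: contra => /eqP ->; apply: mem_last.
Qed.

Lemma reach_has_neighbour b u v : reach H b u v -> exists x, tedge H u x.
Proof. by case=> _ [[|[y t] s] [//= _ _ _ /andP[/andP[e _] _] _]]; exists y. Qed.

Lemma journey_singleton u v y t : journey H false u v [:: (y, t)] -> y = v /\ tedge H u y.
Proof. by case=> _ /= <- _ /andP[/andP[]]. Qed.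

Lemma journey_cons2 u v y1 t1 y2 t2 s :
  journey H false u v [:: (y1, t1), (y2, t2) & s] ->
  journey2 u y1 y2 /\ journey H false y1 v ((y2, t2) :: s).
Proof.
case=> _ /= Hl /andP[_ Hu] /andP[/andP[e1 l1] Hj] /andP[le Hs].
split; first by exists t1, t2; case/andP: Hj => /andP[e2 l2] _.
by split.
Qed.

Lemma journey_invariant (P : V -> nat -> bool) :
  (forall x y t t', P x t -> tedge H x y -> tlab H x y t' -> t <= t' -> P y t') ->
  forall u v s, journey H false u v s -> P u 0 -> exists t, P v t.
Proof.
move=> closed u v s [_ <- _ Hj Hs] Pu; exists (last 0 (map snd s)).
have step x t0 l : P x t0 -> jcontacts H x l -> path leq t0 (map snd l) ->
    P (last x (map fst l)) (last t0 (map snd l)).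
  elim: l x t0 => [|[y t] l IH] x t0 //= Px /andP[/andP[e lt] Hl] /andP[le Hp].
  exact: IH (closed _ _ _ _ Px e lt le) Hl Hp.
by apply: step => //; case: s Hj Hs => //= [[y t] s] _ ->.
Qed.

Hypothesis wf : tg_wf H.

Lemma tg_irrefl x : ~~ tedge H x x.
Proof. by case: wf. Qed.

Lemma tedge_sym x y : tedge H x y = tedge H y x.
Proof. by case: wf => _ []. Qed.

Lemma tlab_sym x y t : tlab H x y t = tlab H y x t.
Proof. by case: wf => _ [_ []]. Qed.

Lemma tedge_neq x y : tedge H x y -> x != y.
Proof. by apply: contraTneq => ->; apply: tg_irrefl. Qed.

Lemma reach_of_tedge x y : tedge H x y -> reach H false x y.
Proof.
move=> e; have [t l] := wf.2.2.2 _ _ e.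
apply: (@reach_of_journey _ _ _ [:: (y, t)]).
by split=> //=; rewrite ?inE ?tedge_neq ?e ?l.
Qed.

Lemma not_reach_not_tedge x y : ~ reach H false x y -> ~~ tedge H x y /\ ~~ tedge H y x.
Proof.
move=> nxy; split; apply/negP => e; apply: nxy; first exact: reach_of_tedge.
by apply: reach_of_tedge; rewrite tedge_sym.
Qed.

Lemma reach_of_journey2 x y z : x != z -> journey2 x y z -> reach H false x z.
Proof.
move=> nxz [t1 [t2 [e1 l1 e2 l2 le]]].
have nxy := tedge_neq e1; have nyz := tedge_neq e2.
apply: (@reach_of_journey _ _ _ [:: (y, t1); (z, t2)]).
split=> //=.
- by rewrite !inE negb_or nxy nxz nyz.
- by rewrite e1 l1 e2 l2.
- by rewrite le.
Qed.

Lemma journey2_common_neighbour x y z : tedge H x y -> tedge H z y ->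
  journey2 x y z \/ journey2 z y x.
Proof.
move=> exy ezy; have [t1 l1] := wf.2.2.2 _ _ exy; have [t2 l2] := wf.2.2.2 _ _ ezy.
have eyz : tedge H y z by rewrite tedge_sym.
have eyx : tedge H y x by rewrite tedge_sym.
case: (leqP t1 t2) => [le|/ltnW le]; [left; exists t1, t2|right; exists t2, t1].
  by rewrite tlab_sym in l2.
by rewrite tlab_sym in l1.
Qed.

Lemma common_neighbour_reach x y z : x != z -> tedge H x y -> tedge H z y ->
  reach H false x z \/ reach H false z x.
Proof.
move=> nxz exy ezy; case: (journey2_common_neighbour exy ezy) => J.
  by left; apply: reach_of_journey2 J.
by right; apply: reach_of_journey2 J; rewrite eq_sym.
Qed.

Lemma happy_journey2_both_ways x y z : tg_happy H -> y != z ->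
  journey2 y x z -> journey2 z x y -> False.
Proof.
move=> [proper simple] nyz [p [q [eyx lyx exz lxz le1]]] [q' [p' [ezx lzx exy lxy le2]]].
have lab_eq u w t t' : tedge H u w -> tlab H u w t -> tlab H u w t' -> t = t'.
  by move=> e; have [t0 lab_t0] := simple _ _ e; move=> /lab_t0 -> /lab_t0 ->.
rewrite tlab_sym in lyx; rewrite tlab_sym in lzx.
have epp := lab_eq _ _ _ _ exy lyx lxy; have eqq := lab_eq _ _ _ _ exz lzx lxz.
subst p' q'; have epq : p = q by apply/eqP; rewrite eqn_leq le1 le2.
by subst q; apply: (proper _ _ _ nyz exy exz p).
Qed.

End Journeys.

Section Pullback.
Variables (V W : finType) (f : V -> W) (H : tgraph W).

Definition tg_pullback : tgraph V :=
  TGraph (fun x y => tedge H (f x) (f y)) (fun x y => tlab H (f x) (f y)).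

Lemma tg_wf_pullback : tg_wf H -> tg_wf tg_pullback.
Proof.
case=> irr [esym [lsym lab]]; split; first by move=> x; apply: irr.
split; first by move=> x y; apply: esym.
by split=> [x y t|x y]; [apply: lsym | apply: lab].
Qed.

Lemma tg_happy_pullback : injective f -> tg_happy H -> tg_happy tg_pullback.
Proof.
move=> finj [proper simple]; split=> [x y z nyz|x y]; last exact: simple.
by apply: proper; rewrite (inj_eq finj).
Qed.

Let fc (c : V * nat) : W * nat := (f c.1, c.2).

Lemma journey_pullback b u v s : injective f ->
  journey tg_pullback b u v s <-> journey H b (f u) (f v) (map fc s).
Proof.
move=> finj; rewrite /journey.
have -> : jcontacts tg_pullback u s = jcontacts H (f u) (map fc s).
  by elim: s u => [|[y t] s IH] u //=; rewrite IH.
have -> : map fst (map fc s) = map f (map fst s) by rewrite -!map_comp.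
have -> : map snd (map fc s) = map snd s by rewrite -map_comp.
have -> : (map fc s != [::]) = (s != [::]) by case: s.
rewrite -map_cons (map_inj_uniq finj) last_map.
by split=> -[s0 hl *]; split=> //; [rewrite hl | apply: finj].
Qed.

Lemma reach_pullback b u v : bijective f ->
  reach tg_pullback b u v <-> reach H b (f u) (f v).
Proof.
move=> fbij; have finj := bij_inj fbij; case: fbij => g fK gK.
rewrite /reach (inj_eq finj); split=> -[nuv [s J]]; split=> //.
  by exists (map fc s); apply/journey_pullback.
exists (map (fun c => (g c.1, c.2)) s); apply/journey_pullback => //.
suff -> : map fc (map (fun c => (g c.1, c.2)) s) = s by [].
by rewrite -map_comp -[RHS]map_id; apply: eq_map => -[w t]; rewrite /fc /= gK.
Qed.

End Pullback.

Inductive v5 := A | B | C | D | E.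

Definition nat_of_v5 x := match x with A => 0 | B => 1 | C => 2 | D => 3 | E => 4 end.
Definition v5_of_nat n :=
  match n with 0 => Some A | 1 => Some B | 2 => Some C | 3 => Some D | 4 => Some E | _ => None end.
Lemma nat_of_v5K : pcancel nat_of_v5 v5_of_nat. Proof. by case. Qed.
HB.instance Definition _ := Countable.copy v5 (pcan_type nat_of_v5K).
Lemma v5_enumP : Finite.axiom [:: A; B; C; D; E]. Proof. by case. Qed.
HB.instance Definition _ := isFinite.Build v5 v5_enumP.

(* [labG x y] is the unique label of the edge xy, 0 encoding the absence of an edge. *)
Definition labG (x y : v5) : nat :=
  match x, y with
  | A, C | C, A | A, D | D, A => 1
  | B, C | C, B | D, E | E, D => 2
  | C, D | D, C => 3
  | _, _ => 0
  end.

Definition G : tgraph v5 := TGraph (fun x y => labG x y != 0) (fun x y t => t == labG x y).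

Lemma G_wf : tg_wf G.
Proof.
split; first by case.
split; first by do 2 case.
split; first by do 2 case.
by move=> x y _; exists (labG x y) => /=.
Qed.

Lemma G_simple : tg_simple G.
Proof. by move=> x y _; exists (labG x y) => t /=; split=> [/eqP | ->]. Qed.

Ltac journey_witness s := apply: (@reach_of_journey _ _ _ _ _ s); split.

Lemma reach_G_BC : reach G false B C. Proof. by journey_witness [:: (C, 2)]. Qed.
Lemma reach_G_BD : reach G false B D. Proof. by journey_witness [:: (C, 2); (D, 3)]. Qed.
Lemma reach_G_CB : reach G false C B. Proof. by journey_witness [:: (B, 2)]. Qed.
Lemma reach_G_CE : reach G false C E. Proof. by journey_witness [:: (A, 1); (D, 1); (E, 2)]. Qed.
Lemma reach_G_DB : reach G false D B. Proof. by journey_witness [:: (A, 1); (C, 1); (B, 2)]. Qed.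
Lemma reach_G_DE : reach G false D E. Proof. by journey_witness [:: (E, 2)]. Qed.
Lemma reach_G_EC : reach G false E C. Proof. by journey_witness [:: (D, 2); (C, 3)]. Qed.
Lemma reach_G_ED : reach G false E D. Proof. by journey_witness [:: (D, 2)]. Qed.

(* Over-approximations of the (vertex, arrival time) states of journeys from B, resp. E. *)
Definition from_B x t := [|| x == B, (x == C) && (2 <= t) | (x == D) && (3 <= t)].
Definition from_E x t := [|| x == E, (x == D) && (2 <= t) | (x == C) && (3 <= t)].

Lemma from_B_step x y t t' : from_B x t -> tedge G x y -> tlab G x y t' -> t <= t' -> from_B y t'.
Proof. by move=> + + /eqP ->; case: x; case: y => //=; rewrite /from_B /=; lia. Qed.

Lemma from_E_step x y t t' : from_E x t -> tedge G x y -> tlab G x y t' -> t <= t' -> from_E y t'.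
Proof. by move=> + + /eqP ->; case: x; case: y => //=; rewrite /from_E /=; lia. Qed.

Lemma not_reach_G_BA : ~ reach G false B A.
Proof. by case=> _ [s /(journey_invariant from_B_step)/(_ isT) []]. Qed.
Lemma not_reach_G_BE : ~ reach G false B E.
Proof. by case=> _ [s /(journey_invariant from_B_step)/(_ isT) []]. Qed.
Lemma not_reach_G_EA : ~ reach G false E A.
Proof. by case=> _ [s /(journey_invariant from_E_step)/(_ isT) []]. Qed.
Lemma not_reach_G_EB : ~ reach G false E B.
Proof. by case=> _ [s /(journey_invariant from_E_step)/(_ isT) []]. Qed.

Section HappyRealisation.
Variables (H : tgraph v5) (wf : tg_wf H).

Ltac impossible_step := solve [ exfalso; match goal with
  | n : is_true (~~ tedge H ?x ?y), e : is_true (tedge H ?x ?y) |- _ => by rewrite e in n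
  | e : is_true (tedge H ?x ?x) |- _ => by rewrite (negbTE (tg_irrefl wf x)) in e
  | uq : is_true (uniq _) |- _ => by move: uq => /=; rewrite ?andbF
  end ].

Lemma journey2_BCD : ~ reach H false B A ->
  ~~ tedge H B A -> ~~ tedge H B D -> ~~ tedge H B E -> ~~ tedge H C E ->
  reach H false B D -> journey2 H B C D.
Proof.
move=> nBA nBAe nBDe nBEe nCEe [_ [[|[y1 t1] [|[y2 t2] s]] J]]; first by case: J.
  by case: (journey_singleton J) => -> e; rewrite e in nBDe.
have [J12 _] := journey_cons2 J; case: J => _ _ uq _ _.
have [? [? [e1 _ e2 _ _]]] := J12.
case: y1 J12 uq e1 e2 => J12 uq e1 e2; try impossible_step.
case: y2 J12 uq e2 => J12 uq e2; try impossible_step.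
- by case: nBA; apply: (reach_of_journey2 wf) J12.
- exact: J12.
Qed.

Lemma journey2_CDE_or_CAD :
  ~~ tedge H B A -> ~~ tedge H B D -> ~~ tedge H B E -> ~~ tedge H A B ->
  ~~ tedge H A E -> ~~ tedge H D B -> ~~ tedge H C E ->
  reach H false C E -> journey2 H C D E \/ journey2 H C A D.
Proof.
move=> nBAe nBDe nBEe nABe nAEe nDBe nCEe [_ [[|[y1 t1] [|[y2 t2] s]] J]].
- by case: J.
- by case: (journey_singleton J) => -> e; rewrite e in nCEe.
have [J12 J2] := journey_cons2 J; case: J => _ _ uq _ _.
have [? [? [e1 _ e2 _ _]]] := J12.
case: y1 J12 J2 uq e1 e2 => J12 J2 uq e1 e2; try impossible_step;
  case: y2 J12 J2 uq e2 => J12 J2 uq e2; try impossible_step.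
- by right.
- case: s J2 uq => [|[y3 t3] s] J2 uq; first by case: (journey_singleton J2).
  have [[? [? [_ _ e3 _ _]]] _] := journey_cons2 J2.
  by case: y3 J2 uq e3 => J2 uq e3; impossible_step.
- by left.
Qed.

End HappyRealisation.

(* An automorphism of G. *)
Definition swapBE_CD (x : v5) : v5 := match x with B => E | C => D | D => C | E => B | A => A end.
Definition swapCD (x : v5) : v5 := match x with C => D | D => C | y => y end.

Lemma swapBE_CD_bij : bijective swapBE_CD. Proof. by apply: inv_bij; case. Qed.
Lemma swapCD_bij : bijective swapCD. Proof. by apply: inv_bij; case. Qed.

Lemma no_common_neighbour_BE (H : tgraph v5) y : tg_wf H ->
  ~ reach H false B E -> ~ reach H false E B -> tedge H B y -> tedge H E y -> False.
Proof. by move=> wf nBE nEB eB eE; case: (common_neighbour_reach wf _ eB eE). Qed.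

Lemma happy_reach_pattern_absurd (H : tgraph v5) : tg_wf H -> tg_happy H ->
  ~ reach H false B A -> ~ reach H false B E -> ~ reach H false E A -> ~ reach H false E B ->
  reach H false B D -> reach H false E C -> reach H false C E -> reach H false D B ->
  tedge H B C -> tedge H E D -> False.
Proof.
move=> wf hap nBA nBE nEA nEB rBD rEC rCE rDB eBC eED.
have [nBAe nABe] := not_reach_not_tedge wf nBA.
have [nBEe nEBe] := not_reach_not_tedge wf nBE.
have [nEAe nAEe] := not_reach_not_tedge wf nEA.
have common_BE := no_common_neighbour_BE wf nBE nEB.
have nBDe : ~~ tedge H B D by apply/negP => eBD; apply: common_BE eBD eED.
have nCEe : ~~ tedge H C E.
  by apply/negP => eCE; apply: common_BE eBC _; rewrite (tedge_sym wf).
have nDBe : ~~ tedge H D B by rewrite (tedge_sym wf).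
have nECe : ~~ tedge H E C by rewrite (tedge_sym wf).
pose H' := tg_pullback swapBE_CD H.
have wf' : tg_wf H' := tg_wf_pullback _ wf.
have reach_H' u v := reach_pullback H false u v swapBE_CD_bij.
have BCD := journey2_BCD wf nBA nBAe nBDe nBEe nCEe rBD.
have EDC : journey2 H E D C.
  by apply: (journey2_BCD wf') => //; [move/reach_H' | apply/reach_H'].
have [CDE | CAD] := journey2_CDE_or_CAD wf nBAe nBDe nBEe nABe nAEe nDBe nCEe rCE.
  exact: (happy_journey2_both_ways wf hap _ CDE EDC).
have [DCB | DAC] : journey2 H D C B \/ journey2 H D A C.
  by apply: (journey2_CDE_or_CAD wf') => //; apply/reach_H'.
- exact: (happy_journey2_both_ways wf hap _ BCD DCB).
- exact: (happy_journey2_both_ways wf hap _ CAD DAC).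
Qed.

Lemma happy_reach_neq_G (H : tgraph v5) : tg_wf H -> tg_happy H ->
  ~ (forall u v, reach G false u v <-> reach H false u v).
Proof.
move=> wf hap hR.
have rH u v : reach G false u v -> reach H false u v by move/hR.
have nH u v : ~ reach G false u v -> ~ reach H false u v by move=> n /hR.
have nBA := nH _ _ not_reach_G_BA; have nBE := nH _ _ not_reach_G_BE.
have nEA := nH _ _ not_reach_G_EA; have nEB := nH _ _ not_reach_G_EB.
have [[nBAe _] [nBEe _]] := (not_reach_not_tedge wf nBA, not_reach_not_tedge wf nBE).
have [[nEAe _] [nEBe _]] := (not_reach_not_tedge wf nEA, not_reach_not_tedge wf nEB).
have BC_or_BD : tedge H B C \/ tedge H B D.
  have [x eBx] := reach_has_neighbour (rH _ _ reach_G_BC).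
  by case: x eBx => eBx; [move: nBAe | move: (tg_irrefl wf B) | left | right | move: nBEe];
    rewrite ?eBx.
have ED_or_EC : tedge H E D \/ tedge H E C.
  have [y eEy] := reach_has_neighbour (rH _ _ reach_G_ED).
  by case: y eEy => eEy; [move: nEAe | move: nEBe | right | left | move: (tg_irrefl wf E)];
    rewrite ?eEy.
case: BC_or_BD ED_or_EC => [eBC | eBD] [eED | eEC].
- exact: (happy_reach_pattern_absurd wf hap nBA nBE nEA nEB
    (rH _ _ reach_G_BD) (rH _ _ reach_G_EC) (rH _ _ reach_G_CE) (rH _ _ reach_G_DB) eBC eED).
- exact: (no_common_neighbour_BE wf nBE nEB eBC eEC).
- exact: (no_common_neighbour_BE wf nBE nEB eBD eED).
pose H' := tg_pullback swapCD H.
have hR' u v : reach G false (swapCD u) (swapCD v) <-> reach H' false u v.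
  exact: iff_trans (hR _ _) (iff_sym (reach_pullback H false u v swapCD_bij)).
have rH' u v : reach G false (swapCD u) (swapCD v) -> reach H' false u v by move/hR'.
have nH' u v : ~ reach G false (swapCD u) (swapCD v) -> ~ reach H' false u v.
  by move=> n /hR'.
exact: (happy_reach_pattern_absurd (tg_wf_pullback _ wf)
  (tg_happy_pullback (bij_inj swapCD_bij) hap)
  (nH' B A not_reach_G_BA) (nH' B E not_reach_G_BE) (nH' E A not_reach_G_EA) (nH' E B not_reach_G_EB)
  (rH' B D reach_G_BC) (rH' E C reach_G_ED) (rH' C E reach_G_DE) (rH' D B reach_G_CB) eBD eEC).
Qed.

Theorem mainTheorem7 :
  exists (V : finType) (G : tgraph V),
    [/\ tg_wf G, tg_simple G &
      forall (W : finType) (H : tgraph W), tg_wf H -> tg_happy H ->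
        ~ digraph_iso (reach G false) (reach H false)].
Proof.
exists v5, G; split=> [|| W H wf hap [f [fbij hf]]]; [exact: G_wf | exact: G_simple |].
apply: (happy_reach_neq_G (tg_wf_pullback f wf) (tg_happy_pullback (bij_inj fbij) hap)).
move=> u v; apply: iff_trans (hf u v) _.
exact: iff_sym (reach_pullback H false u v fbij).
Qed.
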